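(* The admissible, complete, preferred and grounded semantics of fuzzy argumentation frameworks are SCC-recursive, characterized respectively by the following base functions (defined for fuzzy argumentation frameworks $FAF$ with $|SCCS_{FAF}|=1$ and $C\subseteq\mathcal A$): $\mathcal{BF}_{\mathcal{AE}}(FAF,C)=\mathcal{AE}(FAF,C)$; $\mathcal{BF}_{\mathcal{CO}}(FAF,C)=\mathcal{CE}(FAF,C)$; $\mathcal{BF}_{\mathcal{PE}}(FAF,C)=\mathcal{PE}(FAF,C)$; $\mathcal{BF}_{\mathcal{GR}}(FAF,C)=\{GE(FAF,C)\}$. That is, for every fuzzy argumentation framework $FAF=\langle\mathcal A,\rho\rangle$: $\mathcal{AE}(FAF)=\mathcal{GF}_{\mathcal{AE}}(FAF,\mathcal A)$, $\mathcal{CE}(FAF,\mathcal A)=\mathcal{GF}_{\mathcal{CO}}(FAF,\mathcal A)$, $\mathcal{PE}(FAF,\mathcal A)=\mathcal{GF}_{\mathcal{PE}}(FAF,\mathcal A)$, $\{GE(FAF,\mathcal A)\}=\mathcal{GF}_{\mathcal{GR}}(FAF,\mathcal A)$, where $\mathcal{GF}_{\mathcal S}$ is built from the base function $\mathcal{BF}_{\mathcal S}$.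
   Context: Fuzzy sets: a fuzzy set on a crisp set $X$ is a map $S:X\to[0,1]$; $S\subseteq S'$ means $S(x)\le S'(x)$ for all $x$; $\cap,\cup$ are pointwise $\min,\max$; $\mathrm{Supp}(S)=\{x:S(x)>0\}$. A fuzzy point $(x,a)$, $a\in(0,1]$, has value $a$ at $x$ and $0$ elsewhere; $(x,a)\in S$ means $a\le S(x)$. $a*b=\min\{a,b\}$. A fuzzy argumentation framework (FAF) is $\langle\mathcal A,\rho\rangle$ with $\mathrm{Args}$ a crisp set, $\mathcal A$ a fuzzy set on $\mathrm{Args}$, $\rho:\mathrm{Args}\times\mathrm{Args}\to[0,1]$, $\rho_{AB}=\rho(A,B)$; $A$ attacks $B$ iff $\rho_{AB}>0$. Fuzzy arguments are fuzzy points $(A,a)\in\mathcal A$. An attack of $(A,a)$ on $(B,b)$ is tolerable if $\min\{a,\rho_{AB}\}+b\le1$, sufficient otherwise. $(A,a)$ weakens $(B,b)$ to $(B,b')$, $b'=\min\{1-\min\{a,\rho_{AB}\},b\}$. $T\subseteq\mathcal A$ weakening defends $(C,c)$ if for every fuzzy argument $(B,b)$ sufficiently attacking $(C,c)$ there is $(A',a')\in T$ weakening $(B,b)$ to some $(B,b')$ which tolerably attacks $(C,c)$. $T$ is conflict-free if no $(A,a),(B,b)\in T$ with $(A,a)$ sufficiently attacking $(B,b)$; admissible if conflict-free and it weakening defends every element of $T$; $\mathcal{AE}(FAF)$ is the set of admissible sets. For $C\subseteq\mathcal A$: $\mathcal{AE}(FAF,C)$ is the set of admissible $E\subseteq C$;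 $\mathcal{CE}(FAF,C)$ is the set of $E\in\mathcal{AE}(FAF,C)$ such that every fuzzy argument $(A,a)\in C$ weakening defended by $E$ lies in $E$; $\mathcal{PE}(FAF,C)$ is the set of $\subseteq$-maximal elements of $\mathcal{AE}(FAF,C)$; $F_{FAF,C}(T)$ is the union of all fuzzy arguments $(A,a)\in C$ weakening defended by $T$, and $GE(FAF,C)$ is the least fixed point of $F_{FAF,C}$. (With $C=\mathcal A$ these are the complete, preferred and grounded extensions of $FAF$.) Path-equivalence on $\mathrm{Args}$: $A\sim B$ iff $A=B$ or there are chains of attacks from $A$ to $B$ and from $B$ to $A$. $SCC_{FAF}(A)$ is the fuzzy set with value $\mathcal A(B)$ at each $B\sim A$, $0$ elsewhere; $SCCS_{FAF}$ is the set of these. $outparents_{FAF}(S)$ is the fuzzy set of $(B,\mathcal A(B))$ with $B\notin\mathrm{Supp}(S)$ attacking some argument of $\mathrm{Supp}(S)$. For $T\subseteq\mathcal A$, $FAF\downarrow_T=\langle T,\rho|_{\mathrm{Supp}(T)\times\mathrm{Supp}(T)}\rangle$, and notions in $FAF\downarrow_T$ refer to its own fuzzy arguments and attacks. For $E\subseteq\mathcal A$, $S\in SCCS_{FAF}$: $L_{FAF}(S,E)(A)=\max_B\big((E\cap outparents_{FAF}(S))(B)*\rho_{BA}\big)$ for $A\in\mathrm{Supp}(S)$, $0$ elsewhere; $R_{FAF}(S,E)(A)=\min\{\mathcal A(A),1-L_{FAF}(S,E)(A)\}$ for $A\in\mathrm{Supp}(S)$, $0$ elsewhere; $D_{FAF}(S,E)$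 is the union of fuzzy points $(A,a)\in R_{FAF}(S,E)$ such that for every $(B,b)\in outparents_{FAF}(S)$ sufficiently attacking $(A,a)$ there is $(C,c)\in E$ weakening $(B,b)$ to some $(B,b')$ which tolerably attacks $(A,a)$. SCC-recursiveness: given a base function $\mathcal{BF}_{\mathcal S}$ assigning to each FAF with $|SCCS_{FAF}|=1$ and each $C\subseteq\mathcal A$ a set of fuzzy subsets of $\mathcal A$, define recursively for any FAF and $C\subseteq\mathcal A$ the set $\mathcal{GF}_{\mathcal S}(FAF,C)$: a fuzzy set $E\subseteq\mathcal A$ belongs to it iff either $|SCCS_{FAF}|=1$ and $E\in\mathcal{BF}_{\mathcal S}(FAF,C)$, or $|SCCS_{FAF}|\neq1$ and for every $S\in SCCS_{FAF}$, $E\cap S\in\mathcal{GF}_{\mathcal S}(FAF\downarrow_{R_{FAF}(S,E)},D_{FAF}(S,E)\cap C)$. A semantics assigning to each FAF a set of extensions $\mathcal E_{\mathcal S}(FAF)$ is SCC-recursive (with base function $\mathcal{BF}_{\mathcal S}$) iff $\mathcal E_{\mathcal S}(FAF)=\mathcal{GF}_{\mathcal S}(FAF,\mathcal A)$ for every FAF $\langle\mathcal A,\rho\rangle$. *)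

(* fuzzy values live in an abstract R : realType (complete
   ordered field, so unions of fuzzy points = suprema exist). *)
From HB Require Import structures.
From mathcomp Require Import all_boot all_order all_algebra.
From mathcomp Require Import classical_sets reals.
Set Implicit Arguments. Unset Strict Implicit. Unset Printing Implicit Defensive.
Import Order.TTheory GRing.Theory Num.Theory.
Local Open Scope ring_scope.
Local Open Scope classical_set_scope.

Section FAF.
Variables (R : realType) (U : finType).

Definition fz := U -> R.

Record faf := MkFAF { args : {set U}; fA : fz; frho : U -> U -> R }.

Definition fle (S S' : fz) := forall x, S x <= S' x.
Definition fsub (E S : fz) := forall x, 0 <= E x /\ E x <= S x.
Definition fcap (S S' : fz) : fz := fun x => Num.min (S x) (S' x).
Definition supp (S : fz) : {set U} := [set x | 0 < S x].

Definition fpt_in (S : fz) (x : U) (a : R) := 0 < a /\ a <= 1 /\ a <= S x.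

Definition fz_union (P : U -> R -> Prop) : fz :=
  fun x => sup [set a | 0 < a /\ a <= 1 /\ P x a].

Section Sem.
Variable F : faf.
Let rho := frho F.

Definition suff_att (A : U) (a : R) (B : U) (b : R) :=
  0 < rho A B /\ 1 < Num.min a (rho A B) + b.
Definition tol_att (A : U) (a : R) (B : U) (b : R) :=
  0 < rho A B /\ Num.min a (rho A B) + b <= 1.
Definition weaken (A : U) (a : R) (B : U) (b : R) :=
  Num.min (1 - Num.min a (rho A B)) b.

Definition wdefends (T : fz) (C : U) (c : R) :=
  forall B b, fpt_in (fA F) B b -> suff_att B b C c ->
    exists A' a', fpt_in T A' a' /\ tol_att B (weaken A' a' B b) C c.

Definition conflict_free (T : fz) :=
  ~ (exists A a B b, fpt_in T A a /\ fpt_in T B b /\ suff_att A a B b).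

Definition admissible (T : fz) :=
  fsub T (fA F) /\ conflict_free T /\
  forall C c, fpt_in T C c -> wdefends T C c.

Definition AE : set fz := [set T | admissible T].
Definition AEC (C : fz) : set fz := [set E | admissible E /\ fsub E C].
Definition CEC (C : fz) : set fz :=
  [set E | AEC C E /\ forall x a, fpt_in C x a -> wdefends E x a -> fpt_in E x a].
Definition PEC (C : fz) : set fz :=
  [set E | AEC C E /\ forall E', AEC C E' -> fle E E' -> E' = E].
Definition Fop (C : fz) (T : fz) : fz :=
  fz_union (fun x a => a <= C x /\ wdefends T x a).
Definition lfp_set (G : fz -> fz) : set fz :=
  [set X | G X = X /\ forall Y, G Y = Y -> fle X Y].
Definition GEset (C : fz) : set fz := lfp_set (Fop C).

Definition att_rel : rel U :=
  fun x y => [&& x \in args F, y \in args F & 0 < rho x y].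
Definition peq (A B : U) := (A == B) || (connect att_rel A B && connect att_rel B A).
Definition SCC (A : U) : fz := fun B => if (B \in args F) && peq A B then fA F B else 0.
Definition SCCS : set fz := [set S | exists2 A, A \in args F & S = SCC A].

Definition outparents (S : fz) : fz := fun B =>
  if [&& B \in args F, B \notin supp S & [exists C, (C \in supp S) && (0 < rho B C)]]
  then fA F B else 0.

Definition Lfz (S E : fz) : fz := fun A =>
  if A \in supp S then
    \big[Num.max/0]_(B : U) Num.min (fcap E (outparents S) B) (rho B A)
  else 0.
Definition Rfz (S E : fz) : fz := fun A =>
  if A \in supp S then Num.min (fA F A) (1 - Lfz S E A) else 0.
Definition Dfz (S E : fz) : fz :=
  fz_union (fun A a => a <= Rfz S E A /\
    forall B b, fpt_in (outparents S) B b -> suff_att B b A a ->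
      exists C c, fpt_in E C c /\ tol_att B (weaken C c B b) A a).
End Sem.

Definition restr (F : faf) (T : fz) : faf :=
  MkFAF (supp T) T
    (fun x y => if (x \in supp T) && (y \in supp T) then frho F x y else 0).

Definition single (P : set fz) := exists S, P = [set S].

(* SCC-recursive scheme GF_S with base function BF, by recursion on a fuel
   n >= #|args F| (sub-frameworks have strictly fewer arguments, so fuel
   #|args F| suffices; fuel 0 only occurs with no arguments, hence no SCCs) *)
Variable BF : faf -> fz -> set fz.
Fixpoint GFn (n : nat) (F : faf) (C : fz) (E : fz) : Prop :=
  fsub E (fA F) /\
  (single (SCCS F) -> BF F C E) /\
  (~ single (SCCS F) ->
     forall S, SCCS F S ->
       match n with
       | 0 => False
       | n'.+1 => GFn n' (restr F (Rfz F S E)) (fcap (Dfz F S E) C) (fcap E S)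
       end).
Definition GF (F : faf) (C : fz) : set fz := [set E | GFn #|args F| F C E].
End FAF.

Definition BF_AE (R : realType) (U : finType) (F : faf R U) (C : fz R U) := AEC F C.
Definition BF_CO (R : realType) (U : finType) (F : faf R U) (C : fz R U) := CEC F C.
Definition BF_PE (R : realType) (U : finType) (F : faf R U) (C : fz R U) := PEC F C.
Definition BF_GR (R : realType) (U : finType) (F : faf R U) (C : fz R U) := GEset F C.

From HB Require Import structures.
From mathcomp Require Import all_boot all_order all_algebra.
From mathcomp Require Import boolp classical_sets reals.
From mathcomp Require Import lra.
Set Implicit Arguments. Unset Strict Implicit. Unset Printing Implicit Defensive.
Import Order.TTheory GRing.Theory Num.Theory.
Local Open Scope ring_scope.
Local Open Scope classical_set_scope.

(* Every attacker of an SCC S from outside lies strictly upstream of S. Hence the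
   weakening defence of an argument of S by a set E splits into defence against the
   outparents of S, which only involves E upstream of S and is recorded by D(S, E),
   and defence inside the framework restricted to R(S, E), whose values are the
   strengths that the attacks of E from outside leave to the arguments of S.
   Admissibility and completeness therefore decompose SCC by SCC directly. For
   maximality and least fixed points one compares two sets SCC by SCC, by induction
   along the upstream order: once they agree upstream of S, their restricted
   frameworks R(S, _) and conditions D(S, _) coincide, and the SCC-wise statement
   applies. The recursion defining GF terminates within #|args| steps, because
   restricting a framework with several SCCs to one of them drops an argument. *)

(* [lra] does not know min/max: name each of them and record which argument it is. *)
Ltac name_minmax t a b :=
  let m := fresh "m" in let Em := fresh "Em" in
  remember t as m eqn:Em; move: Em; case: (leP a b) => ? Em.

Ltac split_minmax :=
  repeat match goal with
  | _ : context [@Order.min ?d ?T ?a ?b] |- _ => name_minmax (@Order.min d T a b) a b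
  | |- context [@Order.min ?d ?T ?a ?b] => name_minmax (@Order.min d T a b) a b
  | _ : context [@Order.max ?d ?T ?a ?b] |- _ => name_minmax (@Order.max d T a b) a b
  | |- context [@Order.max ?d ?T ?a ?b] => name_minmax (@Order.max d T a b) a b
  end.

Section FuzzyUnion.
Variables (R : realType) (U : finType).
Implicit Types (P Q : U -> R -> Prop) (f : U -> R).

Definition down_closed P := forall x a a', 0 < a' -> a' <= a -> P x a -> P x a'.

Definition sup_closed P :=
  forall x a, 0 < a -> a <= 1 -> (forall a', 0 < a' -> a' < a -> P x a') -> P x a.

Lemma fz_union_ge0_le1 P x : 0 <= fz_union P x <= 1.
Proof.
rewrite /fz_union; set E := [set a | _].
have [[y Ey]|nE] := pselect (exists y, E y); last first.
  have -> : E = set0 by apply/seteqP; split=> z // Ez; apply: nE; exists z.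
  by rewrite sup0 lexx ler01.
have ubE : has_ubound E by exists 1 => z [_ []].
apply/andP; split; first by apply: le_trans (ub_le_sup ubE Ey); case: Ey => /ltW.
by apply: ge_sup; [exists y | move=> z [_ []]].
Qed.

Lemma le_fz_union P x a : down_closed P -> sup_closed P -> 0 < a -> a <= 1 ->
  (a <= fz_union P x <-> P x a).
Proof.
move=> dP sP a0 a1; rewrite /fz_union; set E := [set a | _].
have ubE : has_ubound E by exists 1 => z [_ []].
split=> [aE|Pa]; last exact: ub_le_sup.
apply: sP => // a' a'0 a'a.
have [[y Ey]|nE] := pselect (exists y, E y); last first.
  have E0 : E = set0 by apply/seteqP; split=> z // Ez; apply: nE; exists z.
  by move: aE; rewrite E0 sup0 => /(lt_le_trans a0); rewrite ltxx.
have [z [z0 [_ Pz]] a'z] := sup_gt (ex_intro _ y Ey) (lt_le_trans a'a aE).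
by apply: dP Pz => //; apply: ltW.
Qed.

Lemma le_from_levels (u v : R) : 0 <= v -> u <= 1 ->
  (forall a, 0 < a -> a <= 1 -> a <= u -> a <= v) -> u <= v.
Proof.
move=> v0 u1 uv; have [u0|u0] := leP u 0; first exact: le_trans u0 v0.
exact: uv.
Qed.

Lemma eq_from_levels (u v : R) : 0 <= u <= 1 -> 0 <= v <= 1 ->
  (forall a, 0 < a -> a <= 1 -> (a <= u <-> a <= v)) -> u = v.
Proof.
move=> /andP[u0 u1] /andP[v0 v1] uv; apply/eqP; rewrite eq_le.
by apply/andP; split; apply: le_from_levels => // a a0 a1 /(uv a a0 a1).
Qed.

Lemma down_closedI P Q : down_closed P -> down_closed Q ->
  down_closed (fun x a => P x a /\ Q x a).
Proof. by move=> dP dQ x a a' a'0 a'a [Pa Qa]; split; [apply: dP Pa | apply: dQ Qa]. Qed.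

Lemma sup_closedI P Q : sup_closed P -> sup_closed Q ->
  sup_closed (fun x a => P x a /\ Q x a).
Proof.
move=> sP sQ x a a0 a1 PQ.
by split; [apply: sP | apply: sQ] => // a' a'0 a'a; case: (PQ a' a'0 a'a).
Qed.

Lemma down_closed_le f : down_closed (fun x a => a <= f x).
Proof. by move=> x a a' _ a'a; apply: le_trans. Qed.

Lemma sup_closed_le f : sup_closed (fun x a => a <= f x).
Proof.
move=> x a a0 _ below; rewrite leNgt; apply/negP => fxa.
have := below ((a + Num.max (f x) 0) / 2); split_minmax; lra.
Qed.

End FuzzyUnion.

Section WeakDefence.
Variables (R : realType) (U : finType) (G : faf R U).
Implicit Types (Att T : fz R U).

(* [wdefends G T] is [wdefends_from (fA G) T]; other attacker sets [Att] serve to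
   separate the attacks coming from outside an SCC. *)
Definition wdefends_from Att T x a := forall B b, fpt_in Att B b ->
  suff_att G B b x a -> exists C c, fpt_in T C c /\ tol_att G B (weaken G C c B b) x a.

Lemma wdefends_from_mono Att T (T' : fz R U) x a : fle T T' ->
  wdefends_from Att T x a -> wdefends_from Att T' x a.
Proof.
move=> TT' defT B b Bb att; have [C [c [[c0 [c1 cT]] tol]]] := defT B b Bb att.
by exists C, c; split=> //; split=> //; split=> //; apply: le_trans (TT' C).
Qed.

Lemma wdefends_from_down_closed Att T : down_closed (wdefends_from Att T).
Proof.
move=> x a a' a'0 a'a def B b Bb [r0 att].
have [|C [c [Cc [t0 tol]]]] := def B b Bb; first by split=> //; lra.
by exists C, c; split=> //; split=> //; lra.
Qed.

Lemma le_weaken C c c' B b : c <= c' -> weaken G C c' B b <= weaken G C c B b.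
Proof.
move=> cc'; rewrite /weaken; apply: le_min2 => //.
by rewrite lerD2l lerN2; apply: le_min2.
Qed.

(* Only finitely many defenders are available, so if none of them makes the attack
   tolerable at level [a], their least failure margin [d] is positive and already
   defeats defence at the level [a - e / 2]. *)
Lemma wdefends_from_sup_closed Att T : sup_closed (wdefends_from Att T).
Proof.
move=> x a a0 a1 below B b Bb [r0 att].
have [//|noC] := pselect (exists C c, fpt_in T C c /\ tol_att G B (weaken G C c B b) x a).
pose cs C := Num.min (T C) 1.
pose f C := if 0 < T C then Num.min (weaken G C (cs C) B b) (frho G B x) + a - 1 else 1.
have f_gt0 C : 0 < f C.
  rewrite /f; case: ifP => // TC; rewrite subr_gt0 ltNge; apply/negP => tol.
  by apply: noC; exists C, (cs C); split; rewrite /cs /fpt_in //; split_minmax; lra.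
pose d := \big[Num.min/1]_(C : U) f C.
have d0 : 0 < d by apply: lt_bigmin => //; exact: ltr01.
pose e := Num.min d (Num.min (Num.min b (frho G B x) + a - 1) a).
have e0 : 0 < e by rewrite /e !lt_min d0 a0 andbT subr_gt0.
have ed : e <= d by rewrite /e ge_min lexx.
have e_att : e <= Num.min b (frho G B x) + a - 1 by rewrite /e !ge_min lexx !orbT.
have ea : e <= a by rewrite /e !ge_min lexx !orbT.
have [|C [c [[c0 [c1 cT]] [_ tol]]]] := below (a - e / 2) ltac:(lra) ltac:(lra) B b Bb.
  by split=> //; lra.
have TC : 0 < T C := lt_le_trans c0 cT.
have := bigmin_le 1 C f; rewrite -/d /f TC => dC.
have weak_c : Num.min (weaken G C (cs C) B b) (frho G B x) <=
              Num.min (weaken G C c B b) (frho G B x).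
  by apply: le_min2 => //; apply: le_weaken; rewrite /cs le_min cT c1.
lra.
Qed.

Lemma weaken_suff_att C c B b x a : b <= 1 ->
  suff_att G B b x a -> tol_att G B (weaken G C c B b) x a -> suff_att G C c B b.
Proof.
rewrite /weaken => b1 [_ att] [Bx tol].
have mb : 1 < Num.min c (frho G C B) + b.
  rewrite ltNge; apply/negP => mb.
  have wb : Num.min (1 - Num.min c (frho G C B)) b = b by rewrite min_r // lerBrDr addrC.
  by rewrite wb in tol; move: (lt_le_trans att tol); rewrite ltxx.
split => //; have : 0 < Num.min c (frho G C B) by lra.
by rewrite lt_min => /andP[].
Qed.

Lemma tol_weaken_stronger C c B l b x a : l <= b -> suff_att G B l x a ->
  tol_att G B (weaken G C c B l) x a -> tol_att G B (weaken G C c B b) x a.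
Proof.
rewrite /weaken => lb [_ att] [Bx tol]; split => //.
set m := 1 - Num.min c (frho G C B).
have [lm|ml] := leP l m.
  by rewrite (min_r lm) in tol; move: (lt_le_trans att tol); rewrite ltxx.
by rewrite (min_l (ltW ml)) in tol; rewrite (min_l (ltW (lt_le_trans ml lb))).
Qed.

End WeakDefence.

Section Framework.
Variables (R : realType) (U : finType).

Record wf_faf (G : faf R U) : Prop := {
  fA_ge0 : forall x, 0 <= fA G x;
  fA_le1 : forall x, fA G x <= 1;
  frho_ge0 : forall x y, 0 <= frho G x y;
  frho_le1 : forall x y, frho G x y <= 1;
  fA_args : forall x, 0 < fA G x -> x \in args G;
  frho_args : forall x y, 0 < frho G x y -> (x \in args G) && (y \in args G) }.

Lemma supp_E (T : fz R U) x : (x \in supp T) = (0 < T x).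
Proof. by rewrite inE. Qed.

Lemma fpt_in_le (T T' : fz R U) x a : T x <= T' x -> fpt_in T x a -> fpt_in T' x a.
Proof. by move=> TT' [a0 [a1 aT]]; split => //; split => //; apply: le_trans TT'. Qed.

Variable G : faf R U.
Hypothesis wfG : wf_faf G.
Implicit Types (S E W : fz R U).
Local Notation con := (connect (att_rel G)).

Lemma att_rel_of x y : 0 < frho G x y -> att_rel G x y.
Proof. by move=> xy; rewrite /att_rel xy andbT; apply: frho_args. Qed.

Lemma peq_refl s : peq G s s.
Proof. by rewrite /peq eqxx. Qed.

Lemma peq_connect s y : peq G s y -> con s y /\ con y s.
Proof. by case/orP => [/eqP ->|/andP[]//]; rewrite connect0. Qed.

Lemma peq_of_connect s y : con s y -> con y s -> peq G s y.
Proof. by move=> sy ys; rewrite /peq sy ys orbT. Qed.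

Lemma peq_sym s y : peq G s y -> peq G y s.
Proof. by case/peq_connect => sy ys; apply: peq_of_connect. Qed.

Lemma peq_trans s y z : peq G s y -> peq G y z -> peq G s z.
Proof.
case/peq_connect => sy ys /peq_connect [yz zy].
by apply: peq_of_connect; apply: connect_trans; eassumption.
Qed.

Lemma supp_SCC s y :
  (y \in supp (SCC G s)) = [&& y \in args G, peq G s y & 0 < fA G y].
Proof.
rewrite supp_E /SCC; case: ifP => [/andP[-> ->] //|yS]; rewrite ltxx.
by apply/esym/and3P => -[ya sy _]; rewrite ya sy in yS.
Qed.

Lemma SCC_self s : s \in args G -> 0 < fA G s -> s \in supp (SCC G s).
Proof. by move=> sa s0; rewrite supp_SCC sa peq_refl s0. Qed.

Lemma SCCS_SCC s : s \in args G -> SCCS G (SCC G s).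
Proof. by exists s. Qed.

Lemma fcap_SCCE W s y : fsub W (fA G) ->
  fcap W (SCC G s) y = if y \in supp (SCC G s) then W y else 0.
Proof.
move=> WA; have [W0 WAy] := WA y; rewrite /fcap.
have SCC0 : 0 <= SCC G s y by rewrite /SCC; case: ifP => // _; apply: fA_ge0.
case: ifP => yS.
  by move: yS; rewrite supp_SCC => /and3P[ya sy _]; rewrite /SCC ya sy min_l.
have -> : SCC G s y = 0 by apply/eqP; rewrite eq_le SCC0 andbT leNgt -supp_E yS.
exact: min_r.
Qed.

Lemma fcap_SCC_in E s z : fsub E (fA G) -> z \in supp (SCC G s) -> fcap E (SCC G s) z = E z.
Proof. by move=> EA zS; rewrite fcap_SCCE // zS. Qed.

Lemma fpt_in_fcap_SCC E s z a : fsub E (fA G) -> fpt_in (fcap E (SCC G s)) z a ->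
  z \in supp (SCC G s) /\ fpt_in E z a.
Proof.
rewrite /fpt_in => EA; rewrite fcap_SCCE //; case: ifP => // _ [a0 [_ a_le0]].
by move: (lt_le_trans a0 a_le0); rewrite ltxx.
Qed.

Lemma outparentsE S B : outparents G S B =
  if [&& B \in args G, B \notin supp S & [exists C, (C \in supp S) && (0 < frho G B C)]]
  then fA G B else 0.
Proof. by []. Qed.

Lemma outparents_ge0 S B : 0 <= outparents G S B.
Proof. by rewrite outparentsE; case: ifP => // _; apply: fA_ge0. Qed.

Lemma outparents_le_fA S B : outparents G S B <= fA G B.
Proof. by rewrite outparentsE; case: ifP => // _; apply: fA_ge0. Qed.

Lemma outparents_of_attack S B u : B \notin supp S -> u \in supp S -> 0 < frho G B u ->
  outparents G S B = fA G B.
Proof.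
move=> BS uS Bu; rewrite outparentsE BS; have /andP[-> _] := frho_args wfG Bu.
by case: existsP => // -[]; exists u; rewrite uS Bu.
Qed.

Lemma outparents_gt0 S B : 0 < outparents G S B ->
  [/\ B \in args G, B \notin supp S, exists2 u, u \in supp S & 0 < frho G B u
    & outparents G S B = fA G B].
Proof.
rewrite outparentsE; case: ifP; last by rewrite ltxx.
by case/and3P => Ba BS /existsP[u /andP[uS Bu]] _; split => //; exists u.
Qed.

Definition upstream s z := con z s && ~~ con s z.

Lemma outparent_upstream s B : 0 < outparents G (SCC G s) B -> upstream s B.
Proof.
move=> B0; have [Ba BS [u uS Bu] BA] := outparents_gt0 B0.
move: (uS); rewrite supp_SCC => /and3P[_ su _]; have [_ us] := peq_connect su.
have Bs : con B s by apply: connect_trans (connect1 (att_rel_of Bu)) us.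
rewrite /upstream Bs; apply/negP => sB; move/negP: BS; apply.
by rewrite supp_SCC Ba -BA B0 (peq_of_connect sB Bs).
Qed.

Lemma attacker_upstream s B C : upstream s B -> 0 < frho G C B -> upstream s C.
Proof.
case/andP => Bs sB CB; have CB' := connect1 (att_rel_of CB).
rewrite /upstream (connect_trans CB' Bs); apply/negP => sC; move/negP: sB; apply.
exact: connect_trans sC CB'.
Qed.

Lemma upstream_notin_SCC s z : upstream s z -> z \notin supp (SCC G s).
Proof.
case/andP => _ /negP sz; apply/negP; rewrite supp_SCC => /and3P[_ /peq_connect [? _] _].
exact: sz.
Qed.

Lemma upstream_ind (P : U -> Prop) :
  (forall y, (forall z, upstream y z -> P z) -> P y) -> forall y, P y.
Proof.
move=> IH; suff: forall n y, (#|finset (con^~ y)| <= n)%N -> P y.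
  by move=> ind y; apply: (ind _ y (leqnn _)).
elim=> [|n IHn] y yn; apply: IH => z /andP[zy yz].
  by move: yn; rewrite leqn0 => /eqP/cards0_eq/setP/(_ y); rewrite !inE connect0.
apply: IHn; rewrite -ltnS; apply: leq_trans yn; apply: proper_card.
apply/properP; split.
  by apply/fintype.subsetP => w; rewrite !inE => /connect_trans; apply.
by exists y; rewrite !inE ?connect0.
Qed.

Lemma Lfz_in S E x : x \in supp S -> Lfz G S E x =
  \big[Num.max/0]_(B : U) Num.min (fcap E (outparents G S) B) (frho G B x).
Proof. by rewrite /Lfz => ->. Qed.

Lemma Lfz_ge0 S E x : 0 <= Lfz G S E x.
Proof. by rewrite /Lfz; case: ifP => // _; apply: bigmax_ge_id. Qed.

Lemma Lfz_le1 S E x : Lfz G S E x <= 1.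
Proof.
rewrite /Lfz; case: ifP => _; last exact: ler01.
by apply: bigmax_le => [|B _]; rewrite ?ler01 // ge_min frho_le1 ?orbT.
Qed.

Lemma le_Lfz S E x B : fsub E (fA G) -> x \in supp S -> B \notin supp S ->
  0 < frho G B x -> Num.min (E B) (frho G B x) <= Lfz G S E x.
Proof.
move=> EA xS BS Bx; rewrite Lfz_in //; apply: le_trans (le_bigmax _ _ B).
by rewrite /fcap (outparents_of_attack BS xS Bx) (min_l (proj2 (EA B))).
Qed.

Lemma Lfz_attained S E x : fsub E (fA G) -> x \in supp S -> 0 < Lfz G S E x ->
  exists B, [/\ 0 < frho G B x, 0 < outparents G S B
    & Lfz G S E x = Num.min (E B) (frho G B x)].
Proof.
move=> EA xS; rewrite Lfz_in //.
set F := fun B => Num.min (fcap E (outparents G S) B) (frho G B x).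
have F0 B : 0 <= F B.
  by rewrite /F /fcap !le_min outparents_ge0 (frho_ge0 wfG) (proj1 (EA B)).
rewrite (bigmax_eq_arg 0 x xpredT F isT (fun B _ => F0 B)).
set B := [arg max_(B > x) F B]%O.
rewrite /F /fcap !lt_min => /andP[/andP[EB B0] Bx].
have [_ _ _ BA] := outparents_gt0 B0.
by exists B; split => //; rewrite BA (min_l (proj2 (EA B))).
Qed.

Lemma Rfz_in S E x : x \in supp S -> Rfz G S E x = Num.min (fA G x) (1 - Lfz G S E x).
Proof. by rewrite /Rfz => ->. Qed.

Lemma Rfz_out S E x : x \notin supp S -> Rfz G S E x = 0.
Proof. by rewrite /Rfz => /negbTE ->. Qed.

Lemma Rfz_ge0 S E x : 0 <= Rfz G S E x.
Proof.
rewrite /Rfz; case: ifP => // _.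
by rewrite le_min fA_ge0 // subr_ge0 Lfz_le1.
Qed.

Lemma Rfz_le_fA S E x : Rfz G S E x <= fA G x.
Proof. by rewrite /Rfz; case: ifP => _; rewrite ?ge_min ?lexx ?fA_ge0. Qed.

Lemma supp_Rfz S E x : x \in supp (Rfz G S E) -> x \in supp S.
Proof. by rewrite supp_E /Rfz; case: ifP => //; rewrite ltxx. Qed.

Lemma wf_restr T : (forall x, 0 <= T x <= 1) -> wf_faf (restr G T).
Proof.
move=> T01; split => /= [x|x|x y|x y|x|x y].
- by case/andP: (T01 x).
- by case/andP: (T01 x).
- by case: ifP => // _; apply: frho_ge0.
- by case: ifP => _; rewrite ?frho_le1 ?ler01.
- by rewrite supp_E.
- by case: ifP => //; rewrite ltxx.
Qed.

Lemma wf_restr_Rfz S E : wf_faf (restr G (Rfz G S E)).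
Proof.
apply: wf_restr => x; rewrite Rfz_ge0 /=.
exact: le_trans (Rfz_le_fA _ _ _) (fA_le1 wfG x).
Qed.

Section Restriction.
Variables (T : fz R U) (B y : U).
Hypotheses (BT : B \in supp T) (yT : y \in supp T).

Lemma frho_restr : frho (restr G T) B y = frho G B y.
Proof. by rewrite /= BT yT. Qed.

Lemma suff_att_restr b a : suff_att (restr G T) B b y a <-> suff_att G B b y a.
Proof. by rewrite /suff_att frho_restr. Qed.

Lemma tol_att_restr b a : tol_att (restr G T) B b y a <-> tol_att G B b y a.
Proof. by rewrite /tol_att frho_restr. Qed.

Lemma weaken_restr c b : weaken (restr G T) B c y b = weaken G B c y b.
Proof. by rewrite /weaken frho_restr. Qed.

End Restriction.
End Framework.

Section SCCSplit.
Variables (R : realType) (U : finType) (G : faf R U) (s : U) (E W : fz R U).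
Local Notation S := (SCC G s).
Local Notation RS := (Rfz G S E).
Hypotheses (wfG : wf_faf G) (EA : fsub E (fA G)) (WA : fsub W (fA G))
  (W_out : forall z, z \notin supp S -> W z = E z)
  (W_le_RS : forall z, z \in supp S -> W z <= RS z).

Lemma fpt_in_piece C c : fpt_in (fcap W S) C c ->
  [/\ C \in supp S, C \in supp RS & fpt_in W C c].
Proof.
move/(fpt_in_fcap_SCC wfG WA) => [CS [c0 [c1 cW]]].
by split => //; rewrite supp_E; apply: lt_le_trans c0 (le_trans cW (W_le_RS CS)).
Qed.

Lemma weaken_from_outside C c B b : C \notin supp S -> B \in supp S ->
  c <= E C -> b <= RS B -> weaken G C c B b = b.
Proof.
move=> CS BS cE bR; have b1 := le_trans bR (le_trans (Rfz_le_fA wfG _ _ _) (fA_le1 wfG B)).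
rewrite /weaken min_r //; have [CB|CB] := leP (frho G C B) 0.
  by move: CB (frho_ge0 wfG C B); split_minmax; lra.
have := le_Lfz wfG EA BS CS CB; move: bR; rewrite Rfz_in //.
by move: cE; split_minmax; lra.
Qed.

Lemma wdefends_outparents x a : wdefends_from G (fA G) W x a ->
  wdefends_from G (outparents G S) E x a.
Proof.
move=> def B b [b0 [b1 bO]] att.
have Bb : fpt_in (fA G) B b.
  by split => //; split => //; apply: le_trans bO (outparents_le_fA wfG _ _).
have [C [c [[c0 [c1 cW]] tol]]] := def B b Bb att.
have [CB _] := weaken_suff_att b1 att tol.
have Bup := outparent_upstream wfG (lt_le_trans b0 bO).
have CS := upstream_notin_SCC (attacker_upstream wfG Bup CB).
by exists C, c; split => //; split => //; split => //; rewrite -W_out.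
Qed.

Lemma wdefends_restr x a : x \in supp S -> 0 < a -> a <= RS x ->
  wdefends_from G (fA G) W x a -> wdefends_from (restr G RS) RS (fcap W S) x a.
Proof.
move=> xS a0 aR def B b [b0 [b1 bR]].
have xR : x \in supp RS by rewrite supp_E; apply: lt_le_trans a0 aR.
have BR : B \in supp RS by rewrite supp_E; apply: lt_le_trans b0 bR.
have BS := supp_Rfz BR.
rewrite suff_att_restr // => att.
have Bb : fpt_in (fA G) B b.
  by split => //; split => //; apply: le_trans bR (Rfz_le_fA wfG _ _ _).
have [C [c [[c0 [c1 cW]] tol]]] := def B b Bb att.
have [CS|CS] := boolP (C \in supp S); last first.
  move: tol att; rewrite weaken_from_outside -?W_out // => -[_ tol] [_ att].
  by lra.
have CR : C \in supp RS by rewrite supp_E; apply: lt_le_trans c0 (le_trans cW (W_le_RS CS)).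
exists C, c; split; first by split => //; split => //; rewrite fcap_SCCE // CS.
by rewrite tol_att_restr // weaken_restr.
Qed.

(* The attack of [(B, b)] with [RS B < b] is first weakened to [(B, RS B)] by the
   outparent realising [Lfz], then defended inside the restricted framework. *)
Lemma wdefends_merge_inside x a B b : x \in supp S -> 0 < a -> a <= 1 -> a <= RS x ->
  wdefends_from (restr G RS) RS (fcap W S) x a ->
  B \in supp S -> fpt_in (fA G) B b -> suff_att G B b x a ->
  exists C c, fpt_in W C c /\ tol_att G B (weaken G C c B b) x a.
Proof.
move=> xS a0 a1 aR def BS [b0 [b1 bA]] att.
have xR : x \in supp RS by rewrite supp_E; apply: lt_le_trans a0 aR.
have [bR|Rb] := leP b (RS B).
  have BR : B \in supp RS by rewrite supp_E; apply: lt_le_trans b0 bR.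
  have [|C [c [Cc tol]]] := def B b (conj b0 (conj b1 bR)); first by rewrite suff_att_restr.
  have [CS CR CW] := fpt_in_piece Cc.
  by exists C, c; split => //; move: tol; rewrite tol_att_restr // weaken_restr.
have RBE := Rfz_in G E BS; rewrite RBE in Rb.
have Lb : 1 - Lfz G S E B < b by move: Rb; split_minmax; lra.
have L0 : 0 < Lfz G S E B by lra.
have [C0 [C0B C0op LE]] := Lfz_attained wfG EA BS L0.
have C0S := upstream_notin_SCC (outparent_upstream wfG C0op).
have RL : RS B = 1 - Lfz G S E B by rewrite RBE min_r //; lra.
have [tolL|sufL] := leP (Num.min (1 - Lfz G S E B) (frho G B x) + a) 1.
  exists C0, (E C0); split.
    have EC0 : 0 < E C0 by move: L0; rewrite LE lt_min => /andP[].
    split => //; split; last by rewrite W_out.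
    exact: le_trans (proj2 (EA C0)) (fA_le1 wfG C0).
  by split; [case: att | rewrite /weaken -LE (min_l (ltW Lb))].
have L1 : 0 < 1 - Lfz G S E B.
  have : Num.min (1 - Lfz G S E B) (frho G B x) <= 1 - Lfz G S E B by rewrite ge_min lexx.
  lra.
have BR : B \in supp RS by rewrite supp_E RL.
have attL : suff_att G B (1 - Lfz G S E B) x a by split => //; case: att.
have [||C [c [Cc tol]]] := def B (1 - Lfz G S E B).
- by split => //; split; [lra | rewrite RL].
- by rewrite suff_att_restr.
have [CS CR CW] := fpt_in_piece Cc.
exists C, c; split => //; apply: tol_weaken_stronger (ltW Lb) attL _.
by move: tol; rewrite tol_att_restr // weaken_restr.
Qed.

Lemma wdefends_merge x a : x \in supp S -> 0 < a -> a <= 1 -> a <= RS x ->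
  wdefends_from G (outparents G S) E x a ->
  wdefends_from (restr G RS) RS (fcap W S) x a -> wdefends_from G (fA G) W x a.
Proof.
move=> xS a0 a1 aR defO defS B b Bb att.
have [BS|BS] := boolP (B \in supp S); first exact: wdefends_merge_inside.
have [b0 [b1 bA]] := Bb; have Bx : 0 < frho G B x by case: att.
have BO := outparents_of_attack wfG BS xS Bx.
have [C [c [[c0 [c1 cE]] tol]]] := defO B b (ltac:(by rewrite /fpt_in BO)) att.
have [CB _] := weaken_suff_att b1 att tol.
have CS : C \notin supp S.
  apply/upstream_notin_SCC/(attacker_upstream wfG _ CB)/(outparent_upstream wfG).
  by rewrite BO; apply: lt_le_trans bA.
by exists C, c; split => //; split => //; split => //; rewrite W_out.
Qed.

Lemma wdefends_split x a : x \in supp S -> 0 < a -> a <= 1 -> a <= RS x ->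
  wdefends_from G (fA G) W x a <->
  wdefends_from G (outparents G S) E x a /\ wdefends_from (restr G RS) RS (fcap W S) x a.
Proof.
move=> xS a0 a1 aR; split => [def|[]]; last exact: wdefends_merge.
by split; [apply: wdefends_outparents | apply: wdefends_restr].
Qed.

End SCCSplit.

Section Operators.
Variables (R : realType) (U : finType) (G : faf R U).
Hypothesis wfG : wf_faf G.
Implicit Types (S E T C : fz R U).

Lemma le_Dfz S E x a : 0 < a -> a <= 1 ->
  (a <= Dfz G S E x <-> a <= Rfz G S E x /\ wdefends_from G (outparents G S) E x a).
Proof.
move=> a0 a1; apply: le_fz_union => //.
  exact: down_closedI (@down_closed_le _ _ _) (@wdefends_from_down_closed _ _ _ _ _).
exact: sup_closedI (@sup_closed_le _ _ _) (@wdefends_from_sup_closed _ _ _ _ _).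
Qed.

Lemma Dfz_ge0_le1 S E x : 0 <= Dfz G S E x <= 1.
Proof. exact: fz_union_ge0_le1. Qed.

Lemma Dfz_le_Rfz S E x : Dfz G S E x <= Rfz G S E x.
Proof.
apply: le_from_levels; [exact: Rfz_ge0 | by case/andP: (Dfz_ge0_le1 S E x) |].
by move=> a a0 a1 /(le_Dfz _ _ _ a0 a1) [].
Qed.

Lemma le_Fop C T x a : 0 < a -> a <= 1 ->
  (a <= Fop G C T x <-> a <= C x /\ wdefends_from G (fA G) T x a).
Proof.
move=> a0 a1; apply: le_fz_union => //.
  exact: down_closedI (@down_closed_le _ _ _) (@wdefends_from_down_closed _ _ _ _ _).
exact: sup_closedI (@sup_closed_le _ _ _) (@wdefends_from_sup_closed _ _ _ _ _).
Qed.

Lemma Fop_ge0_le1 C T x : 0 <= Fop G C T x <= 1.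
Proof. exact: fz_union_ge0_le1. Qed.

Lemma fsub_restr_Dfz S E C : fsub C (fA G) ->
  fsub (fcap (Dfz G S E) C) (fA (restr G (Rfz G S E))).
Proof.
move=> CA x /=; rewrite /fcap le_min ge_min Dfz_le_Rfz.
by case/andP: (Dfz_ge0_le1 S E x) => -> _; case: (CA x).
Qed.

(* If [(x, a)] exceeded [1 - Lfz], the outparent realising [Lfz] would attack it
   sufficiently, and its defender, being upstream, would attack [E] itself. *)
Lemma wdefends_le_Rfz s E W x a : fsub E (fA G) -> conflict_free G E -> fsub W (fA G) ->
  (forall z, z \notin supp (SCC G s) -> W z = E z) ->
  x \in supp (SCC G s) -> 0 < a -> a <= fA G x ->
  wdefends_from G (fA G) W x a -> a <= Rfz G (SCC G s) E x.
Proof.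
move=> EA cfE WA W_out xS a0 aA def; rewrite Rfz_in // le_min aA /=.
have [L0|L0] := leP (Lfz G (SCC G s) E x) 0.
  by have := Lfz_ge0 G (SCC G s) E x; have := fA_le1 wfG x; lra.
have [C0 [C0x C0op LE]] := Lfz_attained wfG EA xS L0.
rewrite lerBrDr leNgt; apply/negP => La.
have EC0 : 0 < E C0 by move: L0; rewrite LE lt_min => /andP[].
have EC01 : E C0 <= 1 := le_trans (proj2 (EA C0)) (fA_le1 wfG C0).
have att0 : suff_att G C0 (E C0) x a by split => //; rewrite -LE addrC.
have [|w [w' [[w0 [w1 wW]] tol]]] := def C0 (E C0) _ att0.
  by split => //; split => //; case: (EA C0).
have [wC0 att] := weaken_suff_att EC01 att0 tol.
have wS := upstream_notin_SCC (attacker_upstream wfG (outparent_upstream wfG C0op) wC0).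
apply: cfE; exists w, w', C0, (E C0).
by split; [split => //; split => //; rewrite -W_out | do !split].
Qed.

Lemma admissible_le_Rfz s E : admissible G E ->
  forall z, z \in supp (SCC G s) -> E z <= Rfz G (SCC G s) E z.
Proof.
move=> [EA [cfE defE]] z zS.
apply: le_from_levels; [exact: Rfz_ge0 | exact: le_trans (proj2 (EA z)) (fA_le1 wfG z) |].
move=> a a0 a1 aE; apply: (wdefends_le_Rfz EA cfE EA) => //.
  exact: le_trans aE (proj2 (EA z)).
by apply: defE; split => //; split.
Qed.

End Operators.

Section Admissible.
Variables (R : realType) (U : finType) (G : faf R U) (C : fz R U).
Hypotheses (wfG : wf_faf G) (CA : fsub C (fA G)).
Implicit Types (E : fz R U).

Lemma AEC_restr E s : AEC G C E ->
  AEC (restr G (Rfz G (SCC G s) E)) (fcap (Dfz G (SCC G s) E) C) (fcap E (SCC G s)).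
Proof.
move=> [[EA [cfE defE]] EC]; set S := SCC G s.
have E_le_R := admissible_le_Rfz wfG (conj EA (conj cfE defE)).
have split := wdefends_split wfG EA EA (fun _ _ => erefl) (E_le_R s).
have ES z : fcap E S z = if z \in supp S then E z else 0 := fcap_SCCE wfG s z EA.
split; first split; [|split|].
- move=> z /=; rewrite ES; case: ifP => zS; last by rewrite lexx Rfz_ge0.
  by split; [case: (EA z) | apply: E_le_R].
- move=> [A [a [B [b [Aa [Bb att]]]]]].
  have [AS Aa'] := fpt_in_fcap_SCC wfG EA Aa.
  have [BS Bb'] := fpt_in_fcap_SCC wfG EA Bb.
  have inR z c : z \in supp S -> fpt_in E z c -> z \in supp (Rfz G S E).
    move=> zS [c0 [_ cE]]; rewrite supp_E.
    exact: lt_le_trans c0 (le_trans cE (E_le_R _ _ zS)).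
  rewrite suff_att_restr ?(inR _ _ AS Aa') ?(inR _ _ BS Bb') // in att.
  by apply: cfE; exists A, a, B, b.
- move=> x a xa; have [xS [a0 [a1 aE]]] := fpt_in_fcap_SCC wfG EA xa.
  have aR : a <= Rfz G S E x := le_trans aE (E_le_R _ _ xS).
  by case: ((split x a xS a0 a1 aR).1 (defE x a (conj a0 (conj a1 aE)))).
- move=> z; rewrite ES /fcap; case: ifP => zS; last first.
    by rewrite lexx le_min; case/andP: (Dfz_ge0_le1 G S E z) => -> _; case: (CA z).
  split; first by case: (EA z).
  rewrite le_min; apply/andP; split; last by case: (EC z).
  apply: le_from_levels; [by case/andP: (Dfz_ge0_le1 G S E z) |
    exact: le_trans (proj2 (EA z)) (fA_le1 wfG z) |].
  move=> a a0 a1 aE; have aR := le_trans aE (E_le_R _ _ zS).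
  apply/(le_Dfz G _ _ _ a0 a1); split => //.
  by case: ((split z a zS a0 a1 aR).1 (defE z a (conj a0 (conj a1 aE)))).
Qed.

Section Glue.
Variable E : fz R U.
Hypotheses (EA : fsub E (fA G)) (pieces : forall S, SCCS G S ->
  AEC (restr G (Rfz G S E)) (fcap (Dfz G S E) C) (fcap E S)).

Lemma glue_piece z : 0 < E z ->
  [/\ z \in args G, z \in supp (SCC G z) & SCCS G (SCC G z)].
Proof.
move=> Ez; have Az : 0 < fA G z := lt_le_trans Ez (proj2 (EA z)).
have za := fA_args wfG Az.
by split; [| exact: SCC_self | exact: SCCS_SCC].
Qed.

Lemma glue_le_Rfz s : s \in args G ->
  forall z, z \in supp (SCC G s) -> E z <= Rfz G (SCC G s) E z.
Proof.
move=> sa z zS; have [[fsubS _] _] := pieces (SCCS_SCC sa).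
by have [_] := fsubS z; rewrite (fcap_SCC_in wfG).
Qed.

Lemma glue_le_Dfz_C z : z \in args G -> z \in supp (SCC G z) ->
  E z <= Dfz G (SCC G z) E z /\ E z <= C z.
Proof.
move=> za zS; have [_ EDC] := pieces (SCCS_SCC za).
by have [_] := EDC z; rewrite (fcap_SCC_in wfG) // le_min => /andP[].
Qed.

(* Attacks on [E] from other SCCs are bounded by [Lfz], and [E] stays below [1 - Lfz]. *)
Lemma glue_conflict_free : conflict_free G E.
Proof.
move=> [A [a [B [b [[a0 [a1 aE]] [[b0 [b1 bE]] att]]]]]].
have [Ba BS SB] := glue_piece (lt_le_trans b0 bE).
have [[_ [cfS _]] _] := pieces SB.
have [AS|AS] := boolP (A \in supp (SCC G B)).
  have AR : A \in supp (Rfz G (SCC G B) E).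
    by rewrite supp_E; apply: lt_le_trans a0 (le_trans aE (glue_le_Rfz Ba AS)).
  have BR : B \in supp (Rfz G (SCC G B) E).
    by rewrite supp_E; apply: lt_le_trans b0 (le_trans bE (glue_le_Rfz Ba BS)).
  apply: cfS; exists A, a, B, b; rewrite suff_att_restr //.
  by split; [|split] => //; split => //; split => //; rewrite (fcap_SCC_in wfG).
have [AB att'] := att; have L := le_Lfz wfG EA BS AS AB.
have := glue_le_Rfz Ba BS; rewrite Rfz_in // le_min => /andP[_ EB].
by move: att' L EB; clear -aE bE; split_minmax; lra.
Qed.

Lemma AEC_glue : AEC G C E.
Proof.
split; first split => //; first split; first exact: glue_conflict_free.
  move=> x a [a0 [a1 aE]].
  have [xa xS Sx] := glue_piece (lt_le_trans a0 aE).
  have [[_ [_ defS]] _] := pieces Sx.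
  have aD := le_trans aE (glue_le_Dfz_C xa xS).1.
  have [aR defO] := (le_Dfz G _ _ _ a0 a1).1 aD.
  apply: (wdefends_merge wfG EA EA (fun _ _ => erefl) (glue_le_Rfz xa) xS a0 a1 aR defO).
  by apply: defS; split => //; split => //; rewrite (fcap_SCC_in wfG).
move=> z; split; first by case: (EA z).
have [Ez|Ez] := leP (E z) 0; first by apply: le_trans Ez _; case: (CA z).
by have [za zS _] := glue_piece Ez; case: (glue_le_Dfz_C za zS).
Qed.

End Glue.

Lemma AEC_SCC_decomposition E : fsub E (fA G) ->
  AEC G C E <-> forall S, SCCS G S ->
    AEC (restr G (Rfz G S E)) (fcap (Dfz G S E) C) (fcap E S).
Proof.
by move=> EA; split => [adm S [s _ ->]|]; [apply: AEC_restr | apply: AEC_glue].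
Qed.

End Admissible.

Section Complete.
Variables (R : realType) (U : finType) (G : faf R U) (C : fz R U).
Hypotheses (wfG : wf_faf G) (CA : fsub C (fA G)).
Implicit Types (E : fz R U).

Lemma CEC_restr E s : CEC G C E ->
  CEC (restr G (Rfz G (SCC G s) E)) (fcap (Dfz G (SCC G s) E) C) (fcap E (SCC G s)).
Proof.
move=> [adm complete]; split; first exact: AEC_restr.
have [[EA _] _] := adm.
move=> x a [a0 [a1 aDC]] defS.
have /andP[aD aC] : (a <= Dfz G (SCC G s) E x) && (a <= C x) by rewrite -le_min.
have [aR defO] := (le_Dfz G _ _ _ a0 a1).1 aD.
have xS : x \in supp (SCC G s) by apply: supp_Rfz; rewrite supp_E; apply: lt_le_trans a0 aR.
have E_le_R := admissible_le_Rfz wfG adm.1 (s := s).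
have def := wdefends_merge wfG EA EA (fun _ _ => erefl) E_le_R xS a0 a1 aR defO defS.
have [_ [_ aE]] := complete x a (conj a0 (conj a1 aC)) def.
by split => //; split => //; rewrite (fcap_SCC_in wfG).
Qed.

Lemma CEC_glue E : fsub E (fA G) -> (forall S, SCCS G S ->
    CEC (restr G (Rfz G S E)) (fcap (Dfz G S E) C) (fcap E S)) -> CEC G C E.
Proof.
move=> EA pieces; have adm : AEC G C E by apply: AEC_glue => // S /pieces [].
split => // x a [a0 [a1 aC]] def.
have aA : a <= fA G x := le_trans aC (proj2 (CA x)).
have xa : x \in args G by apply: (fA_args wfG); apply: lt_le_trans a0 aA.
have xS : x \in supp (SCC G x) by apply: SCC_self => //; apply: lt_le_trans a0 aA.
have [[_ [cfE _]] _] := adm.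
have aR : a <= Rfz G (SCC G x) E x by apply: (wdefends_le_Rfz wfG EA cfE EA).
have E_le_R := admissible_le_Rfz wfG adm.1 (s := x).
have split := wdefends_split wfG EA EA (fun _ _ => erefl) E_le_R xS a0 a1 aR.
have [defO defS] := split.1 def.
have aD : a <= Dfz G (SCC G x) E x by apply/(le_Dfz G _ _ _ a0 a1).
have [_ complete] := pieces _ (SCCS_SCC xa).
have xDC : fpt_in (fcap (Dfz G (SCC G x) E) C) x a.
  by split => //; split => //; rewrite /fcap le_min aD aC.
by case: (fpt_in_fcap_SCC wfG EA (complete x a xDC defS)).
Qed.

Lemma CEC_SCC_decomposition E : fsub E (fA G) ->
  CEC G C E <-> forall S, SCCS G S ->
    CEC (restr G (Rfz G S E)) (fcap (Dfz G S E) C) (fcap E S).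
Proof.
by move=> EA; split => [co S [s _ ->]|]; [apply: CEC_restr | apply: CEC_glue].
Qed.

End Complete.

Section Upstream.
Variables (R : realType) (U : finType) (G : faf R U).
Hypothesis wfG : wf_faf G.

Section Agreement.
Variables (s : U) (E1 E2 : fz R U).
Hypotheses (E1A : fsub E1 (fA G)) (E2A : fsub E2 (fA G))
  (agree : forall z, upstream G s z -> E1 z = E2 z).

Lemma Rfz_upstream : Rfz G (SCC G s) E1 = Rfz G (SCC G s) E2.
Proof.
apply: funext => x; rewrite /Rfz /Lfz; case: (x \in supp _) => //.
congr (Num.min _ (1 - _)); apply: eq_bigr => B _; congr (Num.min _ _); rewrite /fcap.
have [B0|B0] := leP (outparents G (SCC G s) B) 0.
  have -> : outparents G (SCC G s) B = 0.
    by apply/eqP; rewrite eq_le B0 outparents_ge0.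
  by rewrite !min_r //; [case: (E2A B) | case: (E1A B)].
by rewrite agree // outparent_upstream.
Qed.

Lemma wdefends_outparents_upstream (E E' : fz R U) x a :
  (forall z, upstream G s z -> E z = E' z) ->
  wdefends_from G (outparents G (SCC G s)) E x a ->
  wdefends_from G (outparents G (SCC G s)) E' x a.
Proof.
move=> EE' def B b [b0 [b1 bO]] att.
have [C [c [[c0 [c1 cE]] tol]]] := def B b (conj b0 (conj b1 bO)) att.
have [CB _] := weaken_suff_att b1 att tol.
have Cup := attacker_upstream wfG (outparent_upstream wfG (lt_le_trans b0 bO)) CB.
by exists C, c; split => //; split => //; split => //; rewrite -EE'.
Qed.

Lemma Dfz_upstream : Dfz G (SCC G s) E1 = Dfz G (SCC G s) E2.
Proof.
apply: funext => x; apply: eq_from_levels; try exact: Dfz_ge0_le1.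
move=> a a0 a1; rewrite !(le_Dfz G _ _ _ a0 a1) Rfz_upstream.
split => -[aR def]; split => //; apply: wdefends_outparents_upstream def => // z zs.
by rewrite agree.
Qed.

End Agreement.

Lemma eq_from_SCC_pieces (E1 E2 : fz R U) : fsub E1 (fA G) -> fsub E2 (fA G) ->
  (forall y, y \in args G -> (forall z, upstream G y z -> E1 z = E2 z) ->
     fcap E1 (SCC G y) = fcap E2 (SCC G y)) -> E1 = E2.
Proof.
move=> E1A E2A pieces; apply: funext; apply: upstream_ind => y IH.
have [Ay|Ay] := leP (fA G y) 0.
  have [E10 E1y] := E1A y; have [E20 E2y] := E2A y.
  apply/eqP; rewrite eq_le (le_trans E1y (le_trans Ay E20)).
  by rewrite (le_trans E2y (le_trans Ay E10)).
have ya := fA_args wfG Ay.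
have := congr1 (fun f => f y) (pieces y ya IH).
by rewrite /= !(fcap_SCC_in wfG) // SCC_self.
Qed.

End Upstream.

Section Preferred.
Variables (R : realType) (U : finType) (G : faf R U) (C : fz R U).
Hypotheses (wfG : wf_faf G) (CA : fsub C (fA G)).

Section Patch.
Variables (s : U) (E E' : fz R U).
Local Notation S := (SCC G s).
Local Notation RS := (Rfz G S E).
Hypotheses (EA : fsub E (fA G)) (admE : AEC G C E)
  (admE' : AEC (restr G RS) (fcap (Dfz G S E) C) E') (E_le_E' : fle (fcap E S) E').

Definition patch : fz R U := fun z => if z \in supp S then E' z else E z.

Lemma E'_le_RS z : 0 <= E' z /\ E' z <= RS z.
Proof. by case: admE' => -[fsubE' _] _; apply: fsubE'. Qed.

Lemma E'_out z : z \notin supp S -> E' z = 0.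
Proof.
move=> zS; have [E'0 E'R] := E'_le_RS z.
by apply/eqP; rewrite eq_le E'0 andbT -(Rfz_out G E zS).
Qed.

Lemma patch_fsub : fsub patch (fA G).
Proof.
move=> z; rewrite /patch; case: ifP => _; last exact: EA.
by have [E'0 E'R] := E'_le_RS z; split => //; apply: le_trans E'R (Rfz_le_fA wfG _ _ _).
Qed.

Lemma fcap_patch : fcap patch S = E'.
Proof.
apply: funext => z; rewrite (fcap_SCCE wfG s z patch_fsub) /patch.
by case: (boolP (z \in supp S)) => // zS; rewrite E'_out.
Qed.

Lemma le_patch : fle E patch.
Proof.
move=> z; rewrite /patch; case: ifP => // zS.
by have := E_le_E' z; rewrite (fcap_SCC_in wfG).
Qed.

Lemma fpt_in_patch z c : fpt_in patch z c <-> fpt_in (if z \in supp S then E' else E) z c.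
Proof. by rewrite /fpt_in /patch; case: ifP. Qed.

Lemma fpt_in_E'_supp z c : fpt_in E' z c -> z \in supp RS.
Proof.
move=> [c0 [_ cE']]; rewrite supp_E; apply: lt_le_trans c0 (le_trans cE' _).
exact: (E'_le_RS z).2.
Qed.

Lemma no_suff_att_E' p a q b : fpt_in E' p a -> fpt_in E' q b -> ~ suff_att G p a q b.
Proof.
move=> pa qb att; have [[_ [cfE' _]] _] := admE'.
apply: cfE'; exists p, a, q, b; split => //; split => //.
by rewrite suff_att_restr //; [apply: fpt_in_E'_supp pa | apply: fpt_in_E'_supp qb].
Qed.

Lemma no_suff_att_into_S p a q b : p \notin supp S -> q \in supp S -> fpt_in E p a ->
  fpt_in E' q b -> ~ suff_att G p a q b.
Proof.
move=> pS qS [a0 [a1 aE]] [b0 [b1 bE']] [pq att].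
have L := le_Lfz wfG EA qS pS pq.
have := E'_le_RS q; rewrite Rfz_in // => -[_]; rewrite le_min => /andP[_ E'q].
by move: att L E'q; clear -aE bE'; split_minmax; lra.
Qed.

Lemma patch_conflict_free : conflict_free G patch.
Proof.
have [[_ [cfE defE]] _] := admE.
move=> [p [a [q [b [/fpt_in_patch pa [/fpt_in_patch qb att]]]]]].
case: (boolP (p \in supp S)) pa => pS pa; case: (boolP (q \in supp S)) qb => qS qb.
- exact: no_suff_att_E' pa qb att.
- have pA : fpt_in (fA G) p a.
    have [_ E'R] := E'_le_RS p; exact: fpt_in_le (le_trans E'R (Rfz_le_fA wfG _ _ _)) pa.
  have [w [w' [ww' tol]]] := defE q b qb p a pA att.
  have [_ [a1 _]] := pa.
  have watt := weaken_suff_att a1 att tol.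
  have [wS|wS] := boolP (w \in supp S); last exact: no_suff_att_into_S wS pS ww' pa watt.
  apply: no_suff_att_E' _ pa watt; apply: fpt_in_le ww'.
  by have := E_le_E' w; rewrite (fcap_SCC_in wfG).
- exact: no_suff_att_into_S pS qS pa qb att.
- by apply: cfE; exists p, a, q, b.
Qed.

Lemma patch_AEC : AEC G C patch.
Proof.
have [[_ [_ defE]] EC] := admE; have [[_ [_ defE']] E'DC] := admE'.
split; first split; [exact: patch_fsub | split; first exact: patch_conflict_free |].
  move=> x a /fpt_in_patch; case: (boolP (x \in supp S)) => xS xa; last first.
    exact: wdefends_from_mono le_patch (defE x a xa).
  have [a0 [a1 aE']] := xa.
  have aD : a <= Dfz G S E x.
    by have [_] := E'DC x; move/(le_trans aE'); rewrite le_min => /andP[].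
  have [aR defO] := (le_Dfz G _ _ _ a0 a1).1 aD.
  have W_le_RS z : z \in supp S -> patch z <= RS z.
    by rewrite /patch => ->; case: (E'_le_RS z).
  apply: (wdefends_merge wfG EA patch_fsub _ W_le_RS xS a0 a1 aR defO).
    by move=> z /negbTE zS; rewrite /patch zS.
  by rewrite fcap_patch; apply: defE'.
move=> z; split; first by case: (patch_fsub z).
rewrite /patch; case: ifP => _; last by case: (EC z).
by have [_] := E'DC z; move/le_trans; apply; rewrite ge_min lexx orbT.
Qed.

End Patch.

Lemma PEC_restr E s : fsub E (fA G) -> PEC G C E ->
  PEC (restr G (Rfz G (SCC G s) E)) (fcap (Dfz G (SCC G s) E) C) (fcap E (SCC G s)).
Proof.
move=> EA [adm maxE]; split; first exact: AEC_restr.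
move=> E' adm' EE'; have := maxE _ (patch_AEC EA adm adm' EE') (le_patch EA EE').
by move=> <-; rewrite (fcap_patch EA adm').
Qed.

(* A larger admissible set agrees with [E] piece by piece, from upstream down, since
   its pieces live in the same restricted frameworks as those of [E]. *)
Lemma PEC_glue E : fsub E (fA G) -> (forall S, SCCS G S ->
    PEC (restr G (Rfz G S E)) (fcap (Dfz G S E) C) (fcap E S)) -> PEC G C E.
Proof.
move=> EA pieces; have adm : AEC G C E by apply: AEC_glue => // S /pieces [].
split => // E' adm' EE'; have [[E'A _] _] := adm'.
apply: (eq_from_SCC_pieces wfG E'A EA) => y ya agree.
have := AEC_restr wfG CA y adm'.
rewrite (Rfz_upstream wfG E'A EA agree) (Dfz_upstream wfG E'A EA agree) => adm'y.
have [_ maxy] := pieces _ (SCCS_SCC ya).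
by apply: maxy adm'y _ => z; rewrite /fcap le_min2 ?lexx.
Qed.

Lemma PEC_SCC_decomposition E : fsub E (fA G) ->
  PEC G C E <-> forall S, SCCS G S ->
    PEC (restr G (Rfz G S E)) (fcap (Dfz G S E) C) (fcap E S).
Proof.
by move=> EA; split => [pr S [s _ ->]|]; [apply: PEC_restr | apply: PEC_glue].
Qed.

End Preferred.

Section LeastFixpoint.
Variables (R : realType) (U : finType) (G : faf R U) (C : fz R U).
Hypothesis CA : fsub C (fA G).
Implicit Types (T V X Y : fz R U).

Lemma Fop_mono T T' : fle T T' -> fle (Fop G C T) (Fop G C T').
Proof.
move=> TT' x; apply: le_from_levels; [by case/andP: (Fop_ge0_le1 G C T' x) |
  by case/andP: (Fop_ge0_le1 G C T x) |].
move=> a a0 a1 /(le_Fop G _ _ _ a0 a1) [aC def]; apply/(le_Fop G _ _ _ a0 a1).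
by split => //; apply: wdefends_from_mono def.
Qed.

Lemma Fop_le_C T : fle (Fop G C T) C.
Proof.
move=> x; apply: le_from_levels; [by case: (CA x) | by case/andP: (Fop_ge0_le1 G C T x) |].
by move=> a a0 a1 /(le_Fop G _ _ _ a0 a1) [].
Qed.

Definition prefixpoint V := (forall x, 0 <= V x) /\ fle (Fop G C V) V.

(* Knaster--Tarski: the pointwise infimum of all pre-fixpoints is the least one. *)
Lemma least_prefixpoint : exists W, Fop G C W = W /\ forall V, prefixpoint V -> fle W V.
Proof.
pose W x := inf [set y | exists2 V, prefixpoint V & y = V x].
have ne x : [set y | exists2 V, prefixpoint V & y = V x] !=set0.
  exists 1, (fun _ => 1) => //; split => [z|z]; first exact: ler01.
  by case/andP: (Fop_ge0_le1 G C (fun _ => 1) z).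
have lb x : has_lbound [set y | exists2 V, prefixpoint V & y = V x].
  by exists 0 => y [V [V0 _] ->].
have W_le V : prefixpoint V -> fle W V by move=> PV x; apply: ge_inf => //; exists V.
have FW : fle (Fop G C W) W.
  move=> x; apply: lb_le_inf => // y [V PV ->].
  exact: le_trans (Fop_mono (W_le V PV) x) (proj2 PV x).
have PFW : prefixpoint (Fop G C W).
  by split; [move=> x; case/andP: (Fop_ge0_le1 G C W x) | apply: Fop_mono].
exists W; split => //; apply: funext => x; apply/eqP; rewrite eq_le FW /=.
exact: W_le PFW x.
Qed.

Lemma GEset_exists : exists X, GEset G C X.
Proof.
have [W [FW W_le]] := least_prefixpoint; exists W; split => // Y FY; apply: W_le.
by split; [move=> x; rewrite -FY; case/andP: (Fop_ge0_le1 G C Y x) | rewrite FY].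
Qed.

Lemma GEset_le_prefixpoint X V : GEset G C X -> prefixpoint V -> fle X V.
Proof.
move=> [FX X_le] PV x; have [W [FW W_le]] := least_prefixpoint.
exact: le_trans (X_le W FW x) (W_le V PV x).
Qed.

Lemma GEset_unique X Y : GEset G C X -> GEset G C Y -> X = Y.
Proof.
move=> [FX X_le] [FY Y_le]; apply: funext => x; apply/eqP.
by rewrite eq_le (X_le Y FY x) (Y_le X FX x).
Qed.

Lemma GEset_fsub X : GEset G C X -> fsub X C.
Proof.
move=> [FX _] x; rewrite -FX; split; last exact: Fop_le_C.
by case/andP: (Fop_ge0_le1 G C X x).
Qed.

Lemma GEset_fsub_fA X : GEset G C X -> fsub X (fA G).
Proof.
move=> GX x; have [X0 XC] := GEset_fsub GX x.
by split => //; apply: le_trans XC (proj2 (CA x)).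
Qed.

Lemma GEset_wdefends X x a : GEset G C X -> fpt_in X x a -> wdefends_from G (fA G) X x a.
Proof.
by move=> [FX _] [a0 [a1 aX]]; rewrite -FX in aX; case/(le_Fop G _ _ _ a0 a1): aX.
Qed.

Definition unattacked X x a := forall B b, fpt_in X B b -> ~ suff_att G B b x a.

Lemma unattacked_down_closed X : down_closed (unattacked X).
Proof. by move=> x a a' a'0 a'a h B b Bb [Bx att]; apply: (h B b Bb); split => //; lra. Qed.

Lemma unattacked_sup_closed X : sup_closed (unattacked X).
Proof.
move=> x a a0 a1 below B b Bb [Bx att].
pose e := Num.min (Num.min b (frho G B x) + a - 1) a.
have e0 : 0 < e by rewrite /e lt_min a0 andbT; lra.
have ea : e <= a by rewrite /e ge_min lexx orbT.
have e_att : e <= Num.min b (frho G B x) + a - 1 by rewrite /e ge_min lexx.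
by apply: (below (a - e / 2) ltac:(lra) ltac:(lra) B b Bb); split => //; lra.
Qed.

Definition unattacked_part X := fz_union (fun x a => a <= X x /\ unattacked X x a).

Lemma le_unattacked_part X x a : 0 < a -> a <= 1 ->
  (a <= unattacked_part X x <-> a <= X x /\ unattacked X x a).
Proof.
apply: le_fz_union.
  exact: down_closedI (@down_closed_le _ _ _) (@unattacked_down_closed X).
exact: sup_closedI (@sup_closed_le _ _ _) (@unattacked_sup_closed X).
Qed.

Lemma GEset_unattacked_prefixpoint X : GEset G C X -> prefixpoint (unattacked_part X).
Proof.
move=> GX; have XA := GEset_fsub_fA GX; have [FX _] := GX.
set Z := unattacked_part X.
have Z01 x : 0 <= Z x <= 1 := fz_union_ge0_le1 _ x.
have ZX : fle Z X.
  move=> x; apply: le_from_levels; [by case: (XA x) | by case/andP: (Z01 x) |].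
  by move=> a a0 a1 /(le_unattacked_part _ _ a0 a1) [].
split; first by move=> x; case/andP: (Z01 x).
move=> x; apply: le_from_levels; first by case/andP: (Z01 x).
  by case/andP: (Fop_ge0_le1 G C Z x).
move=> a a0 a1 aF; apply/(le_unattacked_part _ _ a0 a1).
have [aC def] := (le_Fop G _ _ _ a0 a1).1 aF.
split; first by rewrite -FX; apply: le_trans aF (Fop_mono ZX x).
move=> B b Bb att.
have [c [c' [[c'0 [c'1 c'Z]] tol]]] := def B b (fpt_in_le (proj2 (XA B)) Bb) att.
have cB := weaken_suff_att (proj1 (proj2 Bb)) att tol.
have cc' : fpt_in (fA G) c c'.
  by split => //; split => //; apply: le_trans c'Z (le_trans (ZX c) (proj2 (XA c))).
have [d [d' [dd' tol']]] := GEset_wdefends GX Bb cc' cB.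
have dc := weaken_suff_att c'1 cB tol'.
by have [_ unatt] := (le_unattacked_part _ _ c'0 c'1).1 c'Z; apply: unatt dd' dc.
Qed.

(* [X] lies below its own unattacked part, so no point of [X] is attacked by [X]. *)
Lemma GEset_AEC X : GEset G C X -> AEC G C X.
Proof.
move=> GX; have XA := GEset_fsub_fA GX.
split; last exact: GEset_fsub.
split => //; split; last by move=> x a; apply: GEset_wdefends.
have XZ := GEset_le_prefixpoint GX (GEset_unattacked_prefixpoint GX).
move=> [p [a [q [b [pa [[b0 [b1 bX]] att]]]]]].
have /(le_unattacked_part _ _ b0 b1) [_ unatt] := le_trans bX (XZ q).
exact: unatt pa att.
Qed.

End LeastFixpoint.

Section Grounded.
Variables (R : realType) (U : finType) (G : faf R U) (C : fz R U).
Hypotheses (wfG : wf_faf G) (CA : fsub C (fA G)).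

Section Piece.
Variables (s : U) (X : fz R U).
Hypothesis GX : GEset G C X.
Local Notation S := (SCC G s).
Local Notation RS := (Rfz G S X).
Local Notation CS := (fcap (Dfz G S X) C).

Lemma GEset_piece_fixpoint : Fop (restr G RS) CS (fcap X S) = fcap X S.
Proof.
have XA := GEset_fsub_fA CA GX; have [FX _] := GX.
have E_le_R := admissible_le_Rfz wfG (GEset_AEC CA GX).1 (s := s).
have split := wdefends_split wfG XA XA (fun _ _ => erefl) E_le_R.
apply: funext => x; apply: eq_from_levels; first exact: Fop_ge0_le1.
  rewrite fcap_SCCE //; case: ifP => _; last by rewrite lexx ler01.
  by case: (XA x) => X0 XA1; rewrite X0 (le_trans XA1 (fA_le1 wfG x)).
move=> a a0 a1; rewrite (le_Fop _ _ _ _ a0 a1) fcap_SCCE //.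
split => [[aDC defS]|].
  have /andP[aD aC] : (a <= Dfz G S X x) && (a <= C x) by rewrite -le_min.
  have [aR defO] := (le_Dfz G _ _ _ a0 a1).1 aD.
  have xS : x \in supp S by apply: supp_Rfz; rewrite supp_E; apply: lt_le_trans a0 aR.
  rewrite xS -FX; apply/(le_Fop G _ _ _ a0 a1); split => //.
  exact: (split x a xS a0 a1 aR).2.
case: ifP => xS; last by move=> a_le0; move: (lt_le_trans a0 a_le0); rewrite ltxx.
rewrite -{1}FX => /(le_Fop G _ _ _ a0 a1) [aC def].
have aR : a <= RS x.
  by apply: le_trans (E_le_R x xS); rewrite -FX; apply/(le_Fop G _ _ _ a0 a1).
have [defO defS] := (split x a xS a0 a1 aR).1 def.
by split => //; rewrite /fcap le_min aC andbT; apply/(le_Dfz G _ _ _ a0 a1).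
Qed.

Section Least.
Variable Y : fz R U.
Hypothesis FY : Fop (restr G RS) CS Y = Y.

Lemma fixpoint_ge0_le_RS z : 0 <= Y z /\ Y z <= RS z.
Proof.
rewrite -FY; split; first by case/andP: (Fop_ge0_le1 (restr G RS) CS Y z).
apply: le_trans (Fop_le_C (fsub_restr_Dfz wfG S X CA) Y z) _.
by rewrite /fcap ge_min Dfz_le_Rfz.
Qed.

Definition meet_on_SCC : fz R U :=
  fun z => if z \in supp S then Num.min (X z) (Y z) else X z.

Lemma meet_on_SCC_prefixpoint : prefixpoint G C meet_on_SCC.
Proof.
have XA := GEset_fsub_fA CA GX; have [FX _] := GX.
have [[_ [cfX _]] _] := GEset_AEC CA GX.
set Z := meet_on_SCC.
have ZX : fle Z X by move=> z; rewrite /Z /meet_on_SCC; case: ifP; rewrite ?ge_min lexx.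
have Z0 z : 0 <= Z z.
  rewrite /Z /meet_on_SCC; case: ifP => _; last by case: (XA z).
  by rewrite le_min (proj1 (XA z)) (proj1 (fixpoint_ge0_le_RS z)).
have ZA : fsub Z (fA G) by move=> z; split => //; apply: le_trans (ZX z) (proj2 (XA z)).
have Z_out z : z \notin supp S -> Z z = X z by rewrite /Z /meet_on_SCC => /negbTE ->.
have Z_le_RS z : z \in supp S -> Z z <= RS z.
  rewrite /Z /meet_on_SCC => ->; rewrite ge_min (proj2 (fixpoint_ge0_le_RS z)) orbT //.
have ZY : fle (fcap Z S) Y.
  move=> z; rewrite fcap_SCCE //; case: ifP => zS; last exact: (fixpoint_ge0_le_RS z).1.
  by rewrite /Z /meet_on_SCC zS ge_min lexx orbT.
split => // x; apply: le_from_levels => //; first by case/andP: (Fop_ge0_le1 G C Z x).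
move=> a a0 a1 aF.
have aX : a <= X x by rewrite -FX; apply: le_trans aF (Fop_mono G C ZX x).
have [aC def] := (le_Fop G _ _ _ a0 a1).1 aF.
rewrite /Z /meet_on_SCC; case: ifP => xS //; rewrite le_min aX /=.
have aR : a <= RS x.
  exact: (wdefends_le_Rfz wfG XA cfX ZA Z_out xS a0 (le_trans aC (proj2 (CA x))) def).
have [defO defS] := (wdefends_split wfG XA ZA Z_out Z_le_RS xS a0 a1 aR).1 def.
have aD : a <= Dfz G S X x by apply/(le_Dfz G _ _ _ a0 a1).
rewrite -FY; apply/(le_Fop _ _ _ _ a0 a1); split; first by rewrite /fcap le_min aD aC.
exact: wdefends_from_mono ZY defS.
Qed.

Lemma GEset_piece_least : fle (fcap X S) Y.
Proof.
have XZ := GEset_le_prefixpoint GX meet_on_SCC_prefixpoint.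
have XA := GEset_fsub_fA CA GX.
move=> z; rewrite fcap_SCCE //; case: ifP => zS.
  by apply: le_trans (XZ z) _; rewrite /meet_on_SCC zS ge_min lexx orbT.
exact: (fixpoint_ge0_le_RS z).1.
Qed.

End Least.

Lemma GEset_restr : GEset (restr G RS) CS (fcap X S).
Proof. by split; [exact: GEset_piece_fixpoint | move=> Y FY; apply: GEset_piece_least]. Qed.

End Piece.

Lemma GEset_glue E : fsub E (fA G) -> (forall S, SCCS G S ->
    GEset (restr G (Rfz G S E)) (fcap (Dfz G S E) C) (fcap E S)) -> GEset G C E.
Proof.
move=> EA pieces; have [X GX] := GEset_exists G C.
suff -> : E = X by [].
apply: (eq_from_SCC_pieces wfG EA (GEset_fsub_fA CA GX)) => y ya agree.
have := pieces _ (SCCS_SCC ya).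
rewrite (Rfz_upstream wfG EA (GEset_fsub_fA CA GX) agree).
rewrite (Dfz_upstream wfG EA (GEset_fsub_fA CA GX) agree).
by move/GEset_unique; apply; apply: GEset_restr.
Qed.

Lemma GEset_SCC_decomposition E : fsub E (fA G) ->
  GEset G C E <-> forall S, SCCS G S ->
    GEset (restr G (Rfz G S E)) (fcap (Dfz G S E) C) (fcap E S).
Proof.
by move=> EA; split => [GE S [s _ ->]|]; [apply: GEset_restr | apply: GEset_glue].
Qed.

End Grounded.

Section Recursion.
Variables (R : realType) (U : finType).

Definition SCC_decomposable (BF : faf R U -> fz R U -> set (fz R U)) :=
  forall G C E, wf_faf G -> fsub C (fA G) -> fsub E (fA G) ->
  BF G C E <-> forall S, SCCS G S ->
    BF (restr G (Rfz G S E)) (fcap (Dfz G S E) C) (fcap E S).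

Lemma SCC_proper (G : faf R U) s : ~ single (SCCS G) -> s \in args G ->
  exists2 y, y \in args G & y \notin supp (SCC G s).
Proof.
move=> nsg sa; apply: contrapT => /forallPNP noy; apply: nsg; exists (SCC G s).
have inS y : y \in args G -> y \in supp (SCC G s).
  by move=> ya; apply/negPn/negP; apply: noy.
apply/seteqP; split => S' /=; last by move=> ->; exists s.
case=> y ya ->; apply: funext => z; rewrite /SCC; case: (boolP (z \in args G)) => //= za.
move: (inS y ya) (inS z za); rewrite !supp_SCC => /and3P[_ sy _] /and3P[_ sz _].
by rewrite sz (peq_trans (peq_sym sy) sz).
Qed.

Lemma card_supp_Rfz_lt (G : faf R U) s E : ~ single (SCCS G) -> s \in args G ->
  (#|supp (Rfz G (SCC G s) E)| < #|args G|)%N.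
Proof.
move=> nsg sa; apply: proper_card; rewrite properE; apply/andP; split.
  by apply/fintype.subsetP => y /supp_Rfz; rewrite supp_SCC => /and3P[].
have [y ya yS] := SCC_proper nsg sa.
by apply/negP => /fintype.subsetP /(_ y ya) /supp_Rfz; rewrite (negbTE yS).
Qed.

Variable BF : faf R U -> fz R U -> set (fz R U).
Hypotheses (BF_fsub : forall G C E, wf_faf G -> fsub C (fA G) -> BF G C E -> fsub E (fA G))
  (BF_dec : SCC_decomposable BF).

Lemma GFn_single n G C E : wf_faf G -> fsub C (fA G) -> single (SCCS G) ->
  GFn BF n G C E <-> BF G C E.
Proof.
move=> wfG CA sg; case: n => [|n] /=.
  by split => [[_ [/(_ sg)]] //|BFE]; split; [exact: BF_fsub BFE | split => // /(_ sg)].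
by split => [[_ [/(_ sg)]] //|BFE]; split; [exact: BF_fsub BFE | split => // /(_ sg)].
Qed.

(* The fuel [n] only has to dominate the number of arguments: restricting to an SCC
   of a framework with several SCCs loses at least one argument. *)
Lemma GFn_BF n G C E : wf_faf G -> fsub C (fA G) -> (#|args G| <= n)%N ->
  GFn BF n G C E <-> BF G C E.
Proof.
elim: n G C E => [|n IH] G C E wfG CA argsn.
all: have [sg|nsg] := pselect (single (SCCS G)); first exact: GFn_single.
  have noS S : ~ SCCS G S.
    move=> [s sa _]; move: argsn; rewrite leqn0 => /eqP/cards0_eq args0.
    by move: sa; rewrite args0 inE.
  split => [[EA _]|BFE]; first by apply/(BF_dec wfG CA EA) => S /noS.
  by split; [exact: BF_fsub BFE | split => // _ S /noS].
have IHS S : SCCS G S -> GFn BF n (restr G (Rfz G S E)) (fcap (Dfz G S E) C) (fcap E S) <->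
    BF (restr G (Rfz G S E)) (fcap (Dfz G S E) C) (fcap E S).
  move=> [s sa ->]; apply: IH; [exact: wf_restr_Rfz | exact: fsub_restr_Dfz |].
  by rewrite -ltnS; apply: leq_trans argsn; apply: card_supp_Rfz_lt.
split => [[EA [_ pieces]]|BFE].
  by apply/(BF_dec wfG CA EA) => S SS; apply/(IHS S SS); apply: pieces.
have EA := BF_fsub wfG CA BFE; split => //; split => // _ S SS; apply/(IHS S SS).
by move/(BF_dec wfG CA EA): BFE; apply.
Qed.

Lemma GF_BF G C : wf_faf G -> fsub C (fA G) -> GF BF G C = BF G C.
Proof. by move=> wfG CA; apply/seteqP; split => E /= /(GFn_BF _ wfG CA (leqnn _)). Qed.

End Recursion.

Unset Implicit Arguments.
Set Strict Implicit.

Theorem mainTheorem8 (R : realType) (T : finType) (A : T -> R) (rho : T -> T -> R)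
  (hA : forall x, 0 <= A x <= 1) (hrho : forall x y, 0 <= rho x y <= 1) :
  let F := MkFAF [set: T] A rho in
  AE F = GF (@BF_AE R T) F A /\
  CEC F A = GF (@BF_CO R T) F A /\
  PEC F A = GF (@BF_PE R T) F A /\
  GEset F A = GF (@BF_GR R T) F A.
Proof.
move=> F.
have wfF : wf_faf F.
  split => /= [x|x|x y|x y|x _|x y _]; rewrite ?finset.in_setT //.
  - by case/andP: (hA x).
  - by case/andP: (hA x).
  - by case/andP: (hrho x y).
  - by case/andP: (hrho x y).
have AF : fsub A (fA F) by move=> x; case/andP: (hA x).
have AE_AEC : AE F = AEC F A.
  by apply/seteqP; split => E /= [// EA adm]; split => //; split.
rewrite AE_AEC !GF_BF //.
- by move=> G C E _ CA; apply: GEset_fsub_fA.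
- by move=> G C E wfG CA EA; apply: GEset_SCC_decomposition.
- by move=> G C E _ _ [[[]]].
- by move=> G C E wfG CA EA; apply: PEC_SCC_decomposition.
- by move=> G C E _ _ [[[]]].
- by move=> G C E wfG CA EA; apply: CEC_SCC_decomposition.
- by move=> G C E _ _ [[]].
- by move=> G C E wfG CA EA; apply: AEC_SCC_decomposition.
Qed.
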